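(* Let $x_0\in\mathbb{R}$, $r>0$, and let $F:(x_0-r,x_0+r)\to\mathbb{R}$ be of class $C^1$ with $F(x_0)=x_0$ and $|F'(x_0)|<1$. Then there exists $r_1\in(0,r)$ such that for every $x_1\in(x_0-r_1,x_0+r_1)$, the sequence defined by $x_{n+1}=F(x_n)$ has $\dim_BS(x_1)=0$, where $S(x_1)=\{x_n:n\ge1\}$.
   Context: For a bounded set $S\subset\mathbb{R}$ and $\varepsilon>0$, $S_\varepsilon=\{y: \mathrm{dist}(y,S)<\varepsilon\}$ and $|S_\varepsilon|$ is its Lebesgue measure. $\mathcal M^{*s}(S)=\limsup_{\varepsilon\to0}|S_\varepsilon|/\varepsilon^{1-s}$, $\mathcal M_*^{s}(S)=\liminf_{\varepsilon\to0}|S_\varepsilon|/\varepsilon^{1-s}$; $\overline{\dim}_BS=\inf\{s\ge0:\mathcal M^{*s}(S)=0\}$, $\underline{\dim}_BS=\inf\{s\ge0:\mathcal M_*^{s}(S)=0\}$, and $\dim_BS$ is their common value when equal. *)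

From Stdlib Require Import Reals.
Open Scope R_scope.

(* Infimum of a set of reals (a real number; an empty or unbounded-below
   set has no infimum in this sense). *)
Definition is_inf (E : R -> Prop) (m : R) : Prop :=
  (forall x, E x -> m <= x) /\
  (forall m', (forall x, E x -> m' <= x) -> m' <= m).

Definition cover_sum (A : R -> Prop) (x : R) : Prop :=
  exists a b : nat -> R,
    (forall n, a n <= b n) /\
    (forall y, A y -> exists n, a n < y < b n) /\
    infinite_sum (fun n => b n - a n) x.

Definition lebesgue_measure (A : R -> Prop) (m : R) : Prop :=
  is_inf (cover_sum A) m.

Definition nbhd (S : R -> Prop) (eps : R) : R -> Prop :=
  fun y => exists x, S x /\ Rabs (y - x) < eps.

(* M^{*s}(S) = limsup_{eps->0+} |S_eps| / eps^(1-s) = 0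
   (the quotient is >= 0, so limsup = 0 iff it tends to 0). *)
Definition upper_content_zero (S : R -> Prop) (s : R) : Prop :=
  forall eta, 0 < eta -> exists delta, 0 < delta /\
    forall eps m, 0 < eps < delta -> lebesgue_measure (nbhd S eps) m ->
      m / Rpower eps (1 - s) < eta.

Definition lower_content_zero (S : R -> Prop) (s : R) : Prop :=
  forall eta, 0 < eta -> forall delta, 0 < delta ->
    exists eps m, 0 < eps < delta /\ lebesgue_measure (nbhd S eps) m /\
      m / Rpower eps (1 - s) < eta.

Definition upper_box_dim (S : R -> Prop) (d : R) : Prop :=
  is_inf (fun s => 0 <= s /\ upper_content_zero S s) d.

Definition lower_box_dim (S : R -> Prop) (d : R) : Prop :=
  is_inf (fun s => 0 <= s /\ lower_content_zero S s) d.

Definition box_dim (S : R -> Prop) (d : R) : Prop :=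
  upper_box_dim S d /\ lower_box_dim S d.

(* S(x1) = { x_n : n >= 1 } with x_{n+1} = F x_n, i.e. { F^k(x1) : k >= 0 } *)
Definition orbit (F : R -> R) (x1 : R) : R -> Prop :=
  fun y => exists k : nat, y = Nat.iter k F x1.

From Stdlib Require Import Reals Lra ZArith Lia.
Open Scope R_scope.

(* Since |F'(x0)| < 1 and F' is continuous, |F'| <= q < 1 on a small ball
   around x0; by the mean value theorem F contracts that ball towards x0, so
   every orbit started in it satisfies |x_k - x0| <= r1 q^k.  For such a
   geometrically convergent sequence, the eps-neighbourhood is covered by K
   intervals of length 2 eps around the first K points plus one interval of
   length 4 eps around x0, where K ~ log(1/eps)/log(1/q) is the first index
   with r1 q^K <= eps.  Its measure is therefore O(eps log(1/eps)), which is
   o(eps^{1-s}) for every s > 0, so both Minkowski contents vanish for all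
   s > 0 and the box dimension is 0. *)

Lemma cover_sum_nonneg (A : R -> Prop) (x : R) : cover_sum A x -> 0 <= x.
Proof.
  intros (a & b & Hab & _ & Hsum).
  assert (Hhead : b 0%nat - a 0%nat <= x).
  { apply (sum_incr (fun n => b n - a n) 0 x Hsum).
    intro n; specialize (Hab n); lra. }
  specialize (Hab 0%nat); lra.
Qed.

(* A set with one countable interval cover has an outer measure: the cover
   sums form a nonempty set bounded below by 0, so completeness gives an
   infimum. *)
Lemma measure_exists (A : R -> Prop) (x : R) :
  cover_sum A x -> exists m, lebesgue_measure A m.
Proof.
  intros Hx.
  set (E := fun y => cover_sum A (- y)).
  assert (Hbound : bound E).
  { exists 0. intros y Hy. apply cover_sum_nonneg in Hy. lra. }
  assert (Hne : exists y, E y).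
  { exists (- x). unfold E. now rewrite Ropp_involutive. }
  destruct (completeness E Hbound Hne) as [l [Hub Hlub]].
  exists (- l). split.
  - intros z Hz.
    assert (Ez : E (- z)) by (unfold E; now rewrite Ropp_involutive).
    specialize (Hub _ Ez). lra.
  - intros m' Hm'.
    assert (l <= - m'); [|lra].
    apply Hlub. intros y Hy. specialize (Hm' _ Hy). lra.
Qed.

Lemma pow_le_one (q : R) (k : nat) : 0 <= q <= 1 -> q ^ k <= 1.
Proof. intros. rewrite <- (pow1 k). apply pow_incr. lra. Qed.

Lemma pow_antitone (q : R) (K k : nat) : 0 <= q <= 1 -> (K <= k)%nat -> q ^ k <= q ^ K.
Proof.
  intros Hq Hk. replace k with (K + (k - K))%nat by lia. rewrite pow_add.
  pose proof (pow_le_one q (k - K) Hq). pose proof (pow_le q K (proj1 Hq)). nra.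
Qed.

(* Covering the eps-neighbourhood of a sequence whose tail from index K on
   stays within rho of c: one interval of length 2 eps around each of the
   first K points, plus one interval of length 2 (rho + eps) around c. *)
Lemma tail_cover (p : nat -> R) (c eps rho : R) (K : nat) :
  0 < eps -> (forall k, (K <= k)%nat -> Rabs (p k - c) <= rho) ->
  cover_sum (nbhd (fun y => exists k, y = p k) eps)
            (2 * eps * INR K + 2 * (rho + eps)).
Proof.
  intros Heps Htail.
  set (a := fun n => if (n <? K)%nat then p n - eps
                     else if (n =? K)%nat then c - (rho + eps) else 0).
  set (b := fun n => if (n <? K)%nat then p n + eps
                     else if (n =? K)%nat then c + (rho + eps) else 0).
  assert (Hrho : 0 <= rho).
  { specialize (Htail K (Nat.le_refl K)). pose proof (Rabs_pos (p K - c)). lra. }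
  assert (Hpartial : forall n, sum_f_R0 (fun n => b n - a n) n =
     if (n <? K)%nat then 2 * eps * INR (S n) else 2 * eps * INR K + 2 * (rho + eps)).
  { induction n as [|n IH]; simpl sum_f_R0.
    - unfold a, b. destruct (0 <? K)%nat eqn:E; [simpl; lra|].
      apply Nat.ltb_ge in E. replace K with 0%nat by lia. simpl. lra.
    - rewrite IH. unfold a, b.
      destruct (n <? K)%nat eqn:E1; destruct (S n <? K)%nat eqn:E2.
      + rewrite !S_INR. lra.
      + apply Nat.ltb_lt in E1. apply Nat.ltb_ge in E2.
        assert (HK : S n = K) by lia.
        rewrite (proj2 (Nat.eqb_eq (S n) K) HK), <- HK. lra.
      + apply Nat.ltb_ge in E1. apply Nat.ltb_lt in E2. lia.
      + apply Nat.ltb_ge in E1. destruct (S n =? K)%nat eqn:E3.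
        * apply Nat.eqb_eq in E3. lia.
        * lra. }
  exists a, b. split; [|split].
  - intro n; unfold a, b. destruct (n <? K)%nat; [lra|]. destruct (n =? K)%nat; lra.
  - intros y [x [[k ->] Hy]]. apply Rabs_def2 in Hy.
    destruct (k <? K)%nat eqn:E.
    + exists k. unfold a, b. rewrite E. lra.
    + exists K. unfold a, b. rewrite Nat.ltb_irrefl, Nat.eqb_refl.
      apply Nat.ltb_ge in E. specialize (Htail k E).
      pose proof (Rle_abs (p k - c)) as Hup.
      pose proof (Rle_abs (- (p k - c))) as Hlow. rewrite Rabs_Ropp in Hlow. lra.
  - intros e He. exists K. intros n Hn. rewrite Hpartial.
    destruct (n <? K)%nat eqn:E; [apply Nat.ltb_lt in E; lia|].
    unfold R_dist. rewrite Rminus_diag, Rabs_R0. lra.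
Qed.

Lemma exp_dominates_affine (a b s eta : R) :
  0 <= a -> 0 <= b -> 0 < s -> 0 < eta ->
  exists T, 0 < T /\ forall t, T < t -> a * t + b < eta * exp (s * t).
Proof.
  intros Ha Hb Hs Heta.
  set (C := 2 * a / s + b).
  assert (HC : 0 <= C) by (unfold C; assert (0 <= 2 * a / s) by
    (apply Rmult_le_pos; [lra | left; apply Rinv_0_lt_compat; lra]); lra).
  set (V := C / eta + 1).
  assert (HV : 1 <= V) by (unfold V; assert (0 <= C / eta) by
    (apply Rmult_le_pos; [lra | left; apply Rinv_0_lt_compat; lra]); lra).
  exists (2 * V / s). split; [apply Rdiv_lt_0_compat; lra|].
  intros t Ht.
  (* With v = s t / 2 > V: a t + b <= C v < eta v^2 < eta e^{2 v}. *)
  set (v := s * t / 2).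
  assert (HvV : V < v).
  { unfold v. apply (Rmult_lt_compat_l (s / 2)) in Ht; [|lra].
    replace (s / 2 * (2 * V / s)) with V in Ht by (field; lra). lra. }
  assert (Hlin : a * t + b <= C * v).
  { unfold C, v. replace ((2 * a / s + b) * (s * t / 2)) with (a * t + b * v)
      by (unfold v; field; lra). fold v. nra. }
  assert (Hquad : C * v < eta * (v * v)).
  { assert (HCV : C = eta * (V - 1)) by (unfold V; field; lra).
    rewrite HCV. assert (Hv0 : 0 < v) by lra.
    assert (eta * (V - 1) < eta * v) by (apply Rmult_lt_compat_l; lra). nra. }
  assert (Hexp : v * v < exp (s * t)).
  { replace (s * t) with (v + v) by (unfold v; field). rewrite exp_plus.
    pose proof (exp_ineq1 v ltac:(lra)). nra. }
  nra.
Qed.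

Lemma exp_le_compat (x y : R) : x <= y -> exp x <= exp y.
Proof. intros [Hlt | ->]; [left; now apply exp_increasing | lra]. Qed.

Lemma ln_div_pos (x y : R) : 0 < x -> 0 < y -> ln (x / y) = ln x - ln y.
Proof. intros Hx Hy. unfold Rdiv. rewrite ln_mult, ln_Rinv; try lra. now apply Rinv_0_lt_compat. Qed.

Lemma nat_ceiling (x : R) : 0 <= x -> exists n : nat, x <= INR n <= x + 1.
Proof.
  intros Hx. destruct (archimed x) as [Hup1 Hup2].
  exists (Z.to_nat (up x)).
  rewrite INR_IZR_INZ, Z2Nat.id; [lra|]. apply le_IZR. lra.
Qed.

Lemma geometric_index (q R0 eps : R) : 0 < q < 1 -> 0 < eps <= R0 ->
  exists K : nat, R0 * q ^ K <= eps /\ INR K <= ln (R0 / eps) / (- ln q) + 1.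
Proof.
  intros Hq Heps.
  set (L := - ln q).
  assert (HL : 0 < L).
  { unfold L. pose proof (ln_increasing q 1 (proj1 Hq) (proj2 Hq)). rewrite ln_1 in *. lra. }
  set (t := ln (R0 / eps)).
  assert (Ht : 0 <= t).
  { unfold t. rewrite ln_div_pos by lra.
    destruct (Rle_lt_or_eq_dec eps R0) as [Hlt | ->]; [lra| |lra].
    pose proof (ln_increasing eps R0 ltac:(lra) Hlt). lra. }
  destruct (nat_ceiling (t / L)) as [K [HK1 HK2]].
  { apply Rmult_le_pos; [lra | left; now apply Rinv_0_lt_compat]. }
  exists K. split; [|exact HK2].
  assert (HtK : t <= L * INR K).
  { apply (Rmult_le_compat_l L) in HK1; [|lra].
    replace (L * (t / L)) with t in HK1 by (field; lra). lra. }
  replace eps with (R0 * exp (- t))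
    by (unfold t; rewrite exp_Ropp, exp_ln by (apply Rdiv_lt_0_compat; lra); field; lra).
  rewrite <- Rpower_pow by lra. unfold Rpower.
  apply Rmult_le_compat_l; [lra|].
  apply exp_le_compat. replace (ln q) with (- L) by (unfold L; ring). lra.
Qed.

(* The key estimate: for a geometric rate q, all small eps admit a K with
   R0 q^K <= eps whose cover length 2 eps K + 4 eps is o(eps^{1-s}), because
   K = O(log(1/eps)) while eps^{-s} grows faster than any logarithm. *)
Lemma geometric_cover_small (q R0 s eta : R) :
  0 < q < 1 -> 0 < R0 -> 0 < s -> 0 < eta ->
  exists delta, 0 < delta /\ forall eps, 0 < eps < delta -> exists K : nat,
    R0 * q ^ K <= eps /\ 2 * eps * INR K + 4 * eps < eta * Rpower eps (1 - s).
Proof.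
  intros Hq HR0 Hs Heta.
  set (L := - ln q).
  assert (HL : 0 < L).
  { unfold L. pose proof (ln_increasing q 1 (proj1 Hq) (proj2 Hq)). rewrite ln_1 in *. lra. }
  set (c := eta * exp (- s * ln R0)).
  assert (Hc : 0 < c) by (unfold c; pose proof (exp_pos (- s * ln R0)); nra).
  destruct (exp_dominates_affine (2 / L) 6 s c) as [T [HT Hdom]];
    [left; apply Rdiv_lt_0_compat; lra | lra | lra | lra |].
  exists (R0 * exp (- T)). split; [pose proof (exp_pos (- T)); nra|].
  intros eps [Heps Hdelta].
  assert (HTlt1 : exp (- T) < 1) by (rewrite <- exp_0; apply exp_increasing; lra).
  set (t := ln (R0 / eps)).
  assert (Hlneps : ln eps = ln R0 - t) by (unfold t; rewrite ln_div_pos; lra).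
  assert (Ht : T < t).
  { assert (Hln : ln eps < ln (R0 * exp (- T))) by (apply ln_increasing; lra).
    rewrite ln_mult, ln_exp in Hln by (try apply exp_pos; lra). lra. }
  destruct (geometric_index q R0 eps Hq ltac:(nra)) as [K [HK HKle]].
  exists K. split; [exact HK|].
  assert (Hcount : 2 * INR K + 4 < c * exp (s * t)).
  { specialize (Hdom t Ht). fold L t in HKle.
    assert (2 * INR K + 4 <= 2 / L * t + 6); [|lra].
    replace (2 / L * t) with (2 * (t / L)) by (field; lra). lra. }
  assert (Hpow : Rpower eps (1 - s) = eps * exp (- s * ln R0) * exp (s * t)).
  { unfold Rpower. rewrite <- (exp_ln eps) at 2 by lra.
    rewrite <- !exp_plus, Hlneps. f_equal. ring. }
  rewrite Hpow. replace (eta * (eps * exp (- s * ln R0) * exp (s * t)))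
    with (eps * (c * exp (s * t))) by (unfold c; ring).
  nra.
Qed.
Lemma abs_lt_between (x c rho : R) : Rabs (x - c) < rho <-> c - rho < x < c + rho.
Proof.
  split.
  - intros H. apply Rabs_def2 in H. lra.
  - intros H. apply Rabs_def1; lra.
Qed.

Lemma abs_bound_near (g : R -> R) (x0 q : R) :
  continuity_pt g x0 -> Rabs (g x0) < q ->
  exists alpha, 0 < alpha /\ forall c, Rabs (c - x0) < alpha -> Rabs (g c) <= q.
Proof.
  intros Hcont Hlt.
  destruct (Hcont (q - Rabs (g x0))) as (alpha & Halpha & Hnear); [lra|].
  exists alpha. split; [exact Halpha|]. intros c Hc.
  destruct (Req_dec c x0) as [-> | Hne]; [lra|].
  assert (Hclose : Rabs (g c - g x0) < q - Rabs (g x0)).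
  { apply Hnear. split; [split; [exact I | auto] | exact Hc]. }
  pose proof (Rabs_triang_inv (g c) (g x0)). lra.
Qed.

Lemma mean_value_bound (F F' : R -> R) (a b q : R) : a <= b ->
  (forall c, a <= c <= b -> derivable_pt_lim F c (F' c)) ->
  (forall c, a <= c <= b -> Rabs (F' c) <= q) ->
  Rabs (F b - F a) <= q * (b - a).
Proof.
  intros [Hlt | ->] Hder Hbound.
  - destruct (MVT_cor2 F F' a b Hlt Hder) as (c & Hmvt & Hc).
    rewrite Hmvt, Rabs_mult, (Rabs_right (b - a)) by lra.
    apply Rmult_le_compat_r; [lra | apply Hbound; lra].
  - rewrite !Rminus_diag, Rabs_R0, Rmult_0_r. lra.
Qed.

Lemma contraction_step (F F' : R -> R) (x0 rho q : R) :
  (forall c, Rabs (c - x0) < rho -> derivable_pt_lim F c (F' c)) ->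
  (forall c, Rabs (c - x0) < rho -> Rabs (F' c) <= q) ->
  F x0 = x0 ->
  forall y, Rabs (y - x0) < rho -> Rabs (F y - x0) <= q * Rabs (y - x0).
Proof.
  intros Hder Hbound Hfix y Hy. apply abs_lt_between in Hy.
  assert (Hseg : forall a b, x0 - rho < a -> b < x0 + rho -> forall c, a <= c <= b ->
    Rabs (c - x0) < rho) by (intros; apply abs_lt_between; lra).
  rewrite <- Hfix at 1.
  destruct (Rle_lt_dec x0 y) as [Hle | Hlt].
  - rewrite (Rabs_right (y - x0)) by lra.
    apply (mean_value_bound F F'); [exact Hle | |]; intros c Hc;
      [apply Hder | apply Hbound]; apply (Hseg x0 y); lra.
  - rewrite Rabs_minus_sym, (Rabs_minus_sym y), (Rabs_right (x0 - y)) by lra.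
    apply (mean_value_bound F F'); [lra | |]; intros c Hc;
      [apply Hder | apply Hbound]; apply (Hseg y x0); lra.
Qed.

Lemma iterate_contraction (G : R -> R) (x0 rho q : R) : 0 <= q <= 1 ->
  (forall y, Rabs (y - x0) < rho -> Rabs (G y - x0) <= q * Rabs (y - x0)) ->
  forall y, Rabs (y - x0) < rho ->
  forall k, Rabs (Nat.iter k G y - x0) <= q ^ k * Rabs (y - x0).
Proof.
  intros Hq Hstep y Hy. induction k as [|k IH]; simpl; [lra|].
  pose proof (pow_le_one q k Hq). pose proof (pow_le q k (proj1 Hq)).
  pose proof (Rabs_pos (y - x0)).
  assert (Hin : Rabs (Nat.iter k G y - x0) < rho) by nra.
  specialize (Hstep _ Hin). nra.
Qed.

Lemma attracting_fixed_point (F F' : R -> R) (x0 r : R) : 0 < r ->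
  (forall x, x0 - r < x < x0 + r -> derivable_pt_lim F x (F' x)) ->
  continuity_pt F' x0 -> Rabs (F' x0) < 1 -> F x0 = x0 ->
  exists r1 q, 0 < r1 < r /\ 0 < q < 1 /\
    forall x1, x0 - r1 < x1 < x0 + r1 ->
    forall k, Rabs (Nat.iter k F x1 - x0) <= r1 * q ^ k.
Proof.
  intros Hr Hder Hcont Hlt1 Hfix.
  set (q := (1 + Rabs (F' x0)) / 2).
  assert (Hq : 0 < q < 1) by (unfold q; pose proof (Rabs_pos (F' x0)); lra).
  destruct (abs_bound_near F' x0 q Hcont ltac:(unfold q; lra)) as (alpha & Halpha & Hbound).
  set (r1 := Rmin alpha r / 2).
  assert (Hr1 : 0 < r1 < alpha /\ r1 < r).
  { unfold r1, Rmin. destruct (Rle_dec alpha r); lra. }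
  assert (Hstep : forall y, Rabs (y - x0) < r1 -> Rabs (F y - x0) <= q * Rabs (y - x0)).
  { apply (contraction_step F F'); [| intros c Hc; apply Hbound; lra | exact Hfix].
    intros c Hc. apply Hder, abs_lt_between. lra. }
  exists r1, q. split; [lra|]. split; [exact Hq|].
  intros x1 Hx1 k. apply abs_lt_between in Hx1.
  pose proof (iterate_contraction F x0 r1 q ltac:(lra) Hstep x1 Hx1 k).
  pose proof (pow_le q k ltac:(lra)). nra.
Qed.

(* The s-dimensional Minkowski content of S vanishes, in a form strong enough
   for both the upper and the lower content: for small eps the measure of the
   eps-neighbourhood exists, and every value of it is below eta eps^{1-s}. *)
Definition content_vanishes (S : R -> Prop) (s : R) : Prop :=
  forall eta, 0 < eta -> exists delta, 0 < delta /\
    forall eps, 0 < eps < delta ->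
      (exists m, lebesgue_measure (nbhd S eps) m) /\
      (forall m, lebesgue_measure (nbhd S eps) m -> m / Rpower eps (1 - s) < eta).

(* A sequence converging geometrically to c has vanishing s-content for every
   s > 0: cover the first K points individually and the tail by one interval,
   with K chosen by geometric_cover_small. *)
Lemma geometric_sequence_content (p : nat -> R) (c R0 q s : R) :
  0 < q < 1 -> 0 < R0 -> 0 < s ->
  (forall k, Rabs (p k - c) <= R0 * q ^ k) ->
  content_vanishes (fun y => exists k, y = p k) s.
Proof.
  intros Hq HR0 Hs Hgeom eta Heta.
  destruct (geometric_cover_small q R0 s eta Hq HR0 Hs Heta) as (delta & Hdelta & Hsmall).
  exists delta. split; [exact Hdelta|]. intros eps Heps.
  destruct (Hsmall eps Heps) as (K & HtailK & Hlength).
  assert (Hcover : cover_sum (nbhd (fun y => exists k, y = p k) eps)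
                             (2 * eps * INR K + 2 * (eps + eps))).
  { apply (tail_cover p c eps eps K); [lra|]. intros k Hk.
    pose proof (pow_antitone q K k ltac:(lra) Hk). specialize (Hgeom k). nra. }
  split; [exact (measure_exists _ _ Hcover)|].
  intros m [Hlower _]. specialize (Hlower _ Hcover).
  assert (Hpos : 0 < Rpower eps (1 - s)) by (unfold Rpower; apply exp_pos).
  apply (Rmult_lt_reg_r (Rpower eps (1 - s))); [exact Hpos|].
  unfold Rdiv. rewrite Rmult_assoc, Rinv_l by lra. lra.
Qed.

Lemma is_inf_zero (E : R -> Prop) :
  (forall s, E s -> 0 <= s) -> (forall s, 0 < s -> E s) -> is_inf E 0.
Proof.
  intros Hnonneg Hpos. split; [exact Hnonneg|].
  intros m' Hm'. destruct (Rle_dec m' 0) as [Hle | Hgt]; [exact Hle|].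
  assert (m' <= m' / 2) by (apply Hm', Hpos; lra). lra.
Qed.

Lemma box_dim_zero (S : R -> Prop) :
  (forall s, 0 < s -> content_vanishes S s) -> box_dim S 0.
Proof.
  intros Hcontent. split; apply is_inf_zero; try (intros s [Hs _]; exact Hs);
    intros s Hs; split; try lra; intros eta Heta;
    destruct (Hcontent s Hs eta Heta) as (delta & Hdelta & Hsmall).
  - exists delta. split; [exact Hdelta|].
    intros eps m Heps Hm. exact (proj2 (Hsmall eps Heps) m Hm).
  - intros delta' Hdelta'.
    set (eps := Rmin delta delta' / 2).
    assert (Heps : 0 < eps < delta /\ eps < delta').
    { unfold eps, Rmin. destruct (Rle_dec delta delta'); lra. }
    destruct (Hsmall eps ltac:(lra)) as [[m Hm] Hbound].
    exists eps, m. split; [lra|]. split; [exact Hm | exact (Hbound m Hm)].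
Qed.

Theorem theorem5 (F : R -> R) (x0 r : R) (hr : 0 < r)
  (hC1 : exists F' : R -> R,
      (forall x, x0 - r < x < x0 + r -> derivable_pt_lim F x (F' x)) /\
      (forall x, x0 - r < x < x0 + r -> continuity_pt F' x) /\
      Rabs (F' x0) < 1)
  (hfix : F x0 = x0) :
  exists r1, 0 < r1 < r /\
    forall x1, x0 - r1 < x1 < x0 + r1 -> box_dim (orbit F x1) 0.
Proof.
  destruct hC1 as (F' & Hder & Hcont & Hslope).
  destruct (attracting_fixed_point F F' x0 r hr Hder
              (Hcont x0 ltac:(lra)) Hslope hfix) as (r1 & q & Hr1 & Hq & Hgeom).
  exists r1. split; [exact Hr1|]. intros x1 Hx1.
  apply box_dim_zero. intros s Hs.
  exact (geometric_sequence_content (fun k => Nat.iter k F x1) x0 r1 q s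
           Hq (proj1 Hr1) Hs (Hgeom x1 Hx1)).
Qed.
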